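(* Let $f:\mathbb{R}^d\times\mathcal{X}\to\mathbb{R}$ be differentiable in $\theta$, with $\mathcal{X}$ a subset of a Euclidean space and $\sup_{x\in\mathcal{X}}\Vert x\Vert\le D<\infty$. Assume (A1): there are $K_1,K_2>0$ with $\Vert\nabla f(\theta,x)-\nabla f(\hat\theta,\hat x)\Vert\le K_1\Vert\theta-\hat\theta\Vert+K_2\Vert x-\hat x\Vert(\Vert\theta\Vert+\Vert\hat\theta\Vert+1)$ for all $\theta,\hat\theta\in\mathbb{R}^d$, $x,\hat x\in\mathcal{X}$; and (N): $(\xi_k)$ are i.i.d. random vectors in $\mathbb{R}^d$ independent of the minibatches, with continuous everywhere-positive density, $\mathbb{E}\xi_1=0$, $\sigma^2:=\mathbb{E}\Vert\xi_1\Vert^2<\infty$. Let $X_n=(x_1,\dots,x_n)$, $\hat X_n=(\hat x_1,\dots,\hat x_n)\in\mathcal{X}^n$ differ in at most one index, $b\in\{1,\dots,n\}$, $\eta>0$, $(\Omega_k)$ i.i.d. uniformly random $b$-subsets of $\{1,\dots,n\}$, and let $P,\hat P$ be the transition kernels of $\theta_k=\theta_{k-1}-\frac\eta b\sum_{i\in\Omega_k}\nabla f(\theta_{k-1},x_i)+\eta\xi_k$ and $\hat\theta_k=\hat\theta_{k-1}-\frac\eta b\sum_{i\in\Omega_k}\nabla f(\hat\theta_{k-1},\hat x_i)+\eta\xi_k$. Let $\theta_*$ and $\hat\theta_*$ be minimizers of $\frac1n\sum_if(\theta,x_i)$ and $\frac1n\sum_if(\theta,\hat x_i)$, $V(\theta)=1+\Vert\theta-\theta_*\Vert^2$,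 $\hat V(\theta)=1+\Vert\theta-\hat\theta_*\Vert^2$, and for $\psi>0$ let $d_\psi(\mu_1,\mu_2)=\int_{\mathbb{R}^d}(1+\psi V(\theta))\,|\mu_1-\mu_2|(d\theta)$. Then $$\sup_{\theta\in\mathbb{R}^d}\frac{d_\psi(\delta_\theta P,\delta_\theta\hat P)}{\hat V(\theta)}\le\frac{2b}{n}\max\Big\{\psi(4+8\eta^2K_1^2),\ 1+\psi\Big(1+\eta^2\sigma^2+(4+8\eta^2K_1^2)\Vert\theta_*-\hat\theta_*\Vert^2+4\eta^2\sup_{x\in\mathcal{X}}\Vert\nabla f(\theta_*,x)\Vert^2\Big)\Big\}.$$
   Context: $|\mu_1-\mu_2|$ is the total variation measure of the signed measure $\mu_1-\mu_2$; $\delta_\theta P=P(\theta,\cdot)$. *)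

From HB Require Import structures.
From mathcomp Require Import all_boot all_order all_algebra.
From mathcomp Require Import all_classical all_reals all_analysis.

Set Implicit Arguments.
Unset Strict Implicit.
Unset Printing Implicit Defensive.

Import Order.TTheory GRing.Theory Num.Theory.
Import numFieldNormedType.Exports.
Local Open Scope classical_set_scope.
Local Open Scope ring_scope.

(* Borel (product) sigma-algebra on R^d = 'rV[R]_d, generated by the coordinates *)
Definition rV_measure_display : measure_display -> measure_display.
Proof. exact. Qed.

Section measurable_rV.
Context (R : realType) (d : nat).
Let coor : 'I_d -> 'rV[R]_d -> R := fun i v => v ord0 i.
Let rV_set0 : g_sigma_preimage coor set0.
Proof. exact: sigma_algebra0. Qed.
Let rV_setC A : g_sigma_preimage coor A -> g_sigma_preimage coor (~` A).
Proof. exact: sigma_algebraC. Qed.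
Let rV_bigcup (F : _^nat) : (forall i, g_sigma_preimage coor (F i)) ->
  g_sigma_preimage coor (\bigcup_i (F i)).
Proof. exact: sigma_algebra_bigcup. Qed.
HB.instance Definition _ := @isMeasurable.Build
  (rV_measure_display default_measure_display)
  'rV[R]_d (g_sigma_preimage coor) rV_set0 rV_setC rV_bigcup.
End measurable_rV.

Section defs.
Context {R : realType}.

Definition dotv {k : nat} (u v : 'rV[R]_k) : R := \sum_(i < k) u ord0 i * v ord0 i.
Definition enorm {k : nat} (v : 'rV[R]_k) : R := Num.sqrt (dotv v v).

Definition setcoord {k : nat} (y : 'rV[R]_k) (i : 'I_k) (t : R) : 'rV[R]_k :=
  \row_j (if j == i then t else y ord0 j).

Fixpoint box_integral {k : nat} (a b : 'rV[R]_k) (g : 'rV[R]_k -> R)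
    (s : seq 'I_k) (y : 'rV[R]_k) : \bar R :=
  match s with
  | [::] => (g y)%:E
  | i :: s' => (\int[lebesgue_measure]_(t in `[a ord0 i, b ord0 i])
                  box_integral a b g s' (setcoord y i t))%E
  end.

Definition box {k : nat} (a b : 'rV[R]_k) : set 'rV[R]_k :=
  [set v | forall i, a ord0 i <= v ord0 i <= b ord0 i].

Definition has_lebesgue_density {k : nat} (mu : probability 'rV[R]_k R)
    (p : 'rV[R]_k -> R) : Prop :=
  (forall v, 0 <= p v) /\
  forall a b : 'rV[R]_k, mu (box a b) = box_integral a b p (enum 'I_k) 0.

(* total-variation-weighted distance
   d_w(mu1, mu2) = \int w d|mu1 - mu2| *)
Definition tv_weighted {k : nat} (w : 'rV[R]_k -> R)
    (mu1 mu2 : probability 'rV[R]_k R) : \bar R :=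
  let nu := cadd (charge_of_finite_measure mu1)
                 (copp (charge_of_finite_measure mu2)) in
  ereal_sup [set r | exists (P N : set 'rV[R]_k) (h : hahn_decomposition nu P N),
                       r = (\int[charge_variation h]_x (w x)%:E)%E].

End defs.

Section sgd.
Context {R : realType}.
Local Open Scope ring_scope.

Definition sgd_step {d n : nat} (grad : 'rV[R]_d -> 'I_n -> 'rV[R]_d)
    (eta : R) (b : nat) (S : {set 'I_n}) (theta xi : 'rV[R]_d) : 'rV[R]_d :=
  theta - (eta / b%:R) *: (\sum_(i in S) grad theta i) + eta *: xi.

Definition is_sgd_kernel {d n : nat} (mu_xi : probability 'rV[R]_d R)
    (grad : 'rV[R]_d -> 'I_n -> 'rV[R]_d) (eta : R) (b : nat)
    (P : 'rV[R]_d -> probability 'rV[R]_d R) : Prop :=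
  forall (theta : 'rV[R]_d) (A : set 'rV[R]_d), measurable A ->
    (P theta A = ((('C(n, b))%:R)^-1)%:E *
      (\sum_(S : {set 'I_n} | #|S| == b)
         mu_xi (sgd_step grad eta b S theta @^-1` A)))%E.
End sgd.

From HB Require Import structures.
From mathcomp Require Import all_boot all_order all_algebra.
From mathcomp Require Import all_classical all_reals all_analysis.
From mathcomp Require Import measurable_realfun ring lra.
Import Order.TTheory GRing.Theory Num.Theory.
Import numFieldNormedType.Exports.
Local Open Scope classical_set_scope.
Local Open Scope ring_scope.

Set Implicit Arguments.
Unset Strict Implicit.
Unset Printing Implicit Defensive.

(* The kernels P(theta, .) and Ph(theta, .) are uniform mixtures, over the
   b-subsets S of {1..n}, of the laws of one noisy step.  The steps of the two
   chains coincide unless S contains the index i0 where the data sets differ,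
   which holds for a fraction b/n of the subsets.  Hence |P(theta, .) - Ph(theta, .)|
   is dominated by the two sub-mixtures over these S, and d_psi is at most b/n
   times the sum of the (1 + psi V)-moments of the two steps.  As the noise is
   centred with second moment sigma2, such a moment equals
   1 + psi (1 + |u|^2 + eta^2 sigma2), with u the drift of the step relative to
   theta_s, and (A1) gives |u|^2 <= c |theta - theta_hs|^2
   + c |theta_s - theta_hs|^2 + 4 eta^2 G. *)

Section euclidean_norm.
Context {R : realType} {k : nat}.
Implicit Types u v w : 'rV[R]_k.

Lemma dotvC u v : dotv u v = dotv v u.
Proof. by apply: eq_bigr => i _; rewrite mulrC. Qed.

Lemma dotvDl u v w : dotv (u + v) w = dotv u w + dotv v w.
Proof. by rewrite /dotv -big_split; apply: eq_bigr => i _; rewrite !mxE mulrDl. Qed.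

Lemma dotvNl u w : dotv (- u) w = - dotv u w.
Proof. by rewrite /dotv -sumrN; apply: eq_bigr => i _; rewrite !mxE mulNr. Qed.

Lemma dotvZl a u w : dotv (a *: u) w = a * dotv u w.
Proof. by rewrite /dotv mulr_sumr; apply: eq_bigr => i _; rewrite !mxE mulrA. Qed.

Lemma dotvDr u v w : dotv w (u + v) = dotv w u + dotv w v.
Proof. by rewrite dotvC dotvDl (dotvC u) (dotvC v). Qed.

Lemma dotvNr u w : dotv w (- u) = - dotv w u.
Proof. by rewrite dotvC dotvNl dotvC. Qed.

Lemma dotvZr a u w : dotv w (a *: u) = a * dotv w u.
Proof. by rewrite dotvC dotvZl dotvC. Qed.

Lemma dotv0l w : dotv 0 w = 0.
Proof. by rewrite /dotv big1 // => i _; rewrite mxE mul0r. Qed.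

Lemma dotv_suml I (s : seq I) (P : pred I) (F : I -> 'rV[R]_k) w :
  dotv (\sum_(i <- s | P i) F i) w = \sum_(i <- s | P i) dotv (F i) w.
Proof. by elim/big_rec2: _ => [|i x y _ <-]; rewrite ?dotv0l ?dotvDl. Qed.

Lemma dotv_sumr I (s : seq I) (P : pred I) (F : I -> 'rV[R]_k) w :
  dotv w (\sum_(i <- s | P i) F i) = \sum_(i <- s | P i) dotv w (F i).
Proof. by rewrite dotvC dotv_suml; apply: eq_bigr => i _; rewrite dotvC. Qed.

Lemma dotv_ge0 v : 0 <= dotv v v.
Proof. by apply: sumr_ge0 => i _; rewrite -expr2 sqr_ge0. Qed.

Lemma enorm_sqr v : enorm v ^+ 2 = dotv v v.
Proof. by rewrite /enorm sqr_sqrtr // dotv_ge0. Qed.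

Lemma enorm_ge0 v : 0 <= enorm v.
Proof. exact: sqrtr_ge0. Qed.

Lemma enorm0 : enorm (0 : 'rV[R]_k) = 0.
Proof. by rewrite /enorm dotv0l sqrtr0. Qed.

Lemma enorm_sqrZ a v : enorm (a *: v) ^+ 2 = a ^+ 2 * enorm v ^+ 2.
Proof. by rewrite !enorm_sqr dotvZl dotvZr mulrA -expr2. Qed.

Lemma enorm_sqrD_le u v : enorm (u + v) ^+ 2 <= 2 * enorm u ^+ 2 + 2 * enorm v ^+ 2.
Proof.
have := dotv_ge0 (u - v).
rewrite !enorm_sqr !dotvDl !dotvDr !dotvNl !dotvNr (dotvC v u); lra.
Qed.

Lemma enorm_sqrB_le u v : enorm (u - v) ^+ 2 <= 2 * enorm u ^+ 2 + 2 * enorm v ^+ 2.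
Proof. by have := enorm_sqrD_le u (- v); rewrite !enorm_sqr dotvNl dotvNr opprK. Qed.

Lemma enorm_sqr_sum_le (I : finType) (S : {set I}) (F : I -> 'rV[R]_k) :
  enorm (\sum_(i in S) F i) ^+ 2 <= #|S|%:R * \sum_(i in S) enorm (F i) ^+ 2.
Proof.
(* Lagrange's identity: the double sum of the |F i - F j|^2 is
   2 #|S| (sum of the |F i|^2) - 2 |sum of the F i|^2. *)
have : 0 <= \sum_(i in S) \sum_(j in S) dotv (F i - F j) (F i - F j).
  by do 2!(apply: sumr_ge0 => ? _); exact: dotv_ge0.
have -> : \sum_(i in S) \sum_(j in S) dotv (F i - F j) (F i - F j) =
    \sum_(i in S) \sum_(j in S) dotv (F i) (F i)
  + \sum_(i in S) \sum_(j in S) dotv (F j) (F j)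
  - 2 * \sum_(i in S) \sum_(j in S) dotv (F i) (F j).
  rewrite mulr_sumr -big_split -sumrB; apply: eq_bigr => i _.
  rewrite mulr_sumr -big_split -sumrB; apply: eq_bigr => j _.
  by rewrite /= !dotvDl !dotvDr !dotvNl !dotvNr (dotvC (F j)); ring.
have -> : \sum_(i in S) \sum_(j in S) dotv (F i) (F i) =
    #|S|%:R * \sum_(i in S) enorm (F i) ^+ 2.
  by rewrite mulr_sumr; apply: eq_bigr => i _; rewrite sumr_const mulr_natl enorm_sqr.
have -> : \sum_(i in S) \sum_(j in S) dotv (F j) (F j) =
    #|S|%:R * \sum_(i in S) enorm (F i) ^+ 2.
  rewrite sumr_const -[in LHS]mulr_natl; congr (_ * _).
  by apply: eq_bigr => i _; rewrite enorm_sqr.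
have -> : \sum_(i in S) \sum_(j in S) dotv (F i) (F j) = enorm (\sum_(i in S) F i) ^+ 2.
  by rewrite enorm_sqr dotv_suml; apply: eq_bigr => i _; rewrite dotv_sumr.
lra.
Qed.

Lemma enorm_sqr_mean_le (I : finType) (S : {set I}) (F : I -> 'rV[R]_k) c :
  (0 < #|S|)%N -> (forall i, i \in S -> enorm (F i) ^+ 2 <= c) ->
  enorm (#|S|%:R^-1 *: \sum_(i in S) F i) ^+ 2 <= c.
Proof.
move=> S0 Fc; set s : R := #|S|%:R.
have s0 : 0 < s by rewrite ltr0n.
have sumFc : \sum_(i in S) enorm (F i) ^+ 2 <= s * c.
  by rewrite /s mulr_natl -sumr_const; exact: ler_sum.
rewrite enorm_sqrZ expr2 -mulrA ler_pdivrMl // ler_pdivrMl //.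
apply: le_trans (enorm_sqr_sum_le S F) _.
by rewrite ler_wpM2l // ltW.
Qed.

End euclidean_norm.

Section measurable_rV.
Context {R : realType} {d : nat}.

Lemma measurable_coord (i : 'I_d) : measurable_fun setT (fun v : 'rV[R]_d => v ord0 i).
Proof.
move=> _ Y mY; rewrite setTI; apply: sub_sigma_algebra.
rewrite -bigcup_seq; exists i => /=; first by rewrite mem_index_enum.
by exists Y => //; rewrite setTI.
Qed.

Lemma measurable_fun_rV dT (T : measurableType dT) (f : T -> 'rV[R]_d) :
  (forall i, measurable_fun setT (fun x => f x ord0 i)) -> measurable_fun setT f.
Proof.
move=> mf; apply: (@measurability _ _ _ _ _ _ (\big[setU/set0]_(i < d)
  preimage_set_system setT (fun v : 'rV[R]_d => v ord0 i) measurable)) => //.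
move=> _ [B + <-]; rewrite -bigcup_seq => -[i _ [Y mY <-]].
by rewrite setTI; exact: mf.
Qed.

Lemma measurable_enorm_sqrB (c : 'rV[R]_d) :
  measurable_fun setT (fun v : 'rV[R]_d => enorm (v - c) ^+ 2).
Proof.
under eq_fun do rewrite enorm_sqr /dotv.
apply: measurable_sum => i; under eq_fun do rewrite !mxE.
by apply: measurable_funM; apply: measurable_funB => //; exact: measurable_coord.
Qed.

Lemma measurable_lyapunov_weight (psi : R) (c : 'rV[R]_d) :
  measurable_fun setT (fun v : 'rV[R]_d => 1 + psi * (1 + enorm (v - c) ^+ 2)).
Proof.
apply: measurable_funD => //; apply: measurable_funM => //.
by apply: measurable_funD => //; exact: measurable_enorm_sqrB.
Qed.

Lemma measurable_sgd_step n (grad : 'rV[R]_d -> 'I_n -> 'rV[R]_d) eta b S theta :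
  measurable_fun setT (sgd_step grad eta b S theta).
Proof.
apply: measurable_fun_rV => i; under eq_fun do rewrite !mxE.
by apply: measurable_funD => //; apply: measurable_funM => //; exact: measurable_coord.
Qed.

End measurable_rV.

Section measure_constructions.
Local Open Scope ereal_scope.
Context {R : realType}.

Definition pushforward_measure dT dU (T : measurableType dT) (U : measurableType dU)
  (mu : {measure set T -> \bar R}) (f : T -> U) (mf : measurable_fun setT f) :
  {measure set U -> \bar R}.
Proof.
(* the canonical measure structure on [pushforward mu f] takes [mf] as argument *)
by refine (pushforward mu f : {measure set U -> \bar R}).
Defined.

Lemma ge0_integral_pushforward_measure dT dU (T : measurableType dT)
    (U : measurableType dU) (mu : {measure set T -> \bar R}) (f : T -> U)
    (mf : measurable_fun setT f) (g : U -> \bar R) :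
  measurable_fun setT g -> (forall y, 0 <= g y) ->
  \int[pushforward_measure mu mf]_y g y = \int[mu]_x g (f x).
Proof. by move=> mg g0; rewrite ge0_integral_pushforward. Qed.

Context dT (T : measurableType dT).

Definition msum_seq (s : seq {measure set T -> \bar R}) : {measure set T -> \bar R} :=
  msum (fun k => @nth {measure set T -> \bar R} mzero s k) (size s).

Lemma msum_seqE s A : msum_seq s A = \sum_(mu <- s) mu A.
Proof.
by rewrite /= /msum [RHS](big_nth (mzero : {measure set T -> \bar R})) big_mkord.
Qed.

Lemma ge0_integral_msum_seq s (g : T -> \bar R) :
  measurable_fun setT g -> (forall x, 0 <= g x) ->
  \int[msum_seq s]_x g x = \sum_(mu <- s) \int[mu]_x g x.
Proof.
move=> mg g0; rewrite ge0_integral_measure_sum //.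
by rewrite [RHS](big_nth (mzero : {measure set T -> \bar R})) big_mkord.
Qed.

End measure_constructions.

Section centered_noise.
Local Open Scope ereal_scope.
Context {R : realType} {d : nat} (mu : probability 'rV[R]_d R) (sigma2 : R).
Hypothesis mean0 : forall i : 'I_d, mu.-integrable setT (fun v => (v ord0 i)%:E) /\
  \int[mu]_v (v ord0 i)%:E = 0.
Hypothesis second_moment : \int[mu]_v ((enorm v) ^+ 2)%:E = sigma2%:E.

Lemma integrable_enorm_sqr : mu.-integrable setT (fun v => (enorm v ^+ 2)%:E).
Proof.
apply/integrableP; split.
  by apply/measurable_EFinP; under eq_fun do rewrite -[v in enorm v]subr0;
    exact: measurable_enorm_sqrB.
under eq_integral do rewrite gee0_abs ?lee_fin ?exprn_ge0 ?enorm_ge0 //.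
by rewrite second_moment ltry.
Qed.

Lemma integrable_dotv (u : 'rV[R]_d) : mu.-integrable setT (fun v => (dotv u v)%:E).
Proof.
under eq_fun do rewrite /dotv -sumEFin.
apply: (integrable_sum measurableT) => i _; under eq_fun do rewrite EFinM.
exact/(integrableZl measurableT)/(mean0 i).1.
Qed.

Lemma integral_dotv (u : 'rV[R]_d) : \int[mu]_v (dotv u v)%:E = 0.
Proof.
under eq_integral do rewrite /dotv -sumEFin.
rewrite integral_sum //; last first.
  by move=> i; under eq_fun do rewrite EFinM; exact/integrableZl/(mean0 i).1.
rewrite big1 // => i _; under eq_integral do rewrite EFinM.
by rewrite integralZl ?(mean0 i).2 ?mule0 //; exact: (mean0 i).1.
Qed.

Lemma integral_affine_enorm_sqr (u : 'rV[R]_d) (a c eta : R) :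
  \int[mu]_v (a + c * enorm (u + eta *: v) ^+ 2)%:E =
  (a + c * (enorm u ^+ 2 + eta ^+ 2 * sigma2))%:E.
Proof.
have expand v : (a + c * enorm (u + eta *: v) ^+ 2 =
    (a + c * enorm u ^+ 2) + ((2 * c * eta) * dotv u v + (c * eta ^+ 2) * enorm v ^+ 2))%R.
  by rewrite !enorm_sqr !dotvDl !dotvDr !dotvZl !dotvZr (dotvC v u); ring.
have int_lin : mu.-integrable setT (fun v => ((2 * c * eta) * dotv u v)%R%:E).
  by under eq_fun do rewrite EFinM; exact/integrableZl/integrable_dotv.
have int_sqr : mu.-integrable setT (fun v => ((c * eta ^+ 2) * enorm v ^+ 2)%R%:E).
  by under eq_fun do rewrite EFinM; exact/integrableZl/integrable_enorm_sqr.
under eq_integral do rewrite expand EFinD.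
rewrite integralD //; last 2 first.
- exact: finite_measure_integrable_cst.
- by under eq_fun do rewrite EFinD; exact: integrableD.
under [X in _ + X]eq_integral do rewrite EFinD.
rewrite integralD // integral_cst // [X in (_ * X)%E]probability_setT mule1.
under eq_integral do rewrite EFinM.
rewrite integralZl //; last exact: integrable_dotv.
rewrite integral_dotv mule0 add0e.
under eq_integral do rewrite EFinM.
rewrite integralZl //; last exact: integrable_enorm_sqr.
by rewrite second_moment -EFinM -EFinD; congr EFin; ring.
Qed.

End centered_noise.

Section gradient_bounds.
Context {R : realType} {d m : nat}.
Variables (X : set 'rV[R]_m) (gradf : 'rV[R]_d -> 'rV[R]_m -> 'rV[R]_d) (K1 K2 : R).
Hypothesis K2_ge0 : 0 <= K2.
Hypothesis gradf_lip : forall theta thetah z zh, X z -> X zh ->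
  enorm (gradf theta z - gradf thetah zh) <=
    K1 * enorm (theta - thetah) + K2 * enorm (z - zh) * (enorm theta + enorm thetah + 1).

Lemma enorm_gradB_le theta thetah z : X z ->
  enorm (gradf theta z - gradf thetah z) <= K1 * enorm (theta - thetah).
Proof.
by move=> Xz; have := gradf_lip theta thetah Xz Xz; rewrite subrr enorm0 mulr0 mul0r addr0.
Qed.

Lemma has_ubound_sqr_grad D theta z0 : X z0 -> (forall z, X z -> enorm z <= D) ->
  has_ubound [set enorm (gradf theta z) ^+ 2 | z in X].
Proof.
move=> Xz0 XD; set q := enorm theta + enorm theta + 1.
have q_ge0 : 0 <= q by have := enorm_ge0 theta; rewrite /q; lra.
exists (2 * (K2 * (2 * D) * q) ^+ 2 + 2 * enorm (gradf theta z0) ^+ 2) => _ [z Xz <-].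
have := enorm_sqrD_le (gradf theta z - gradf theta z0) (gradf theta z0).
rewrite subrK => /le_trans; apply; rewrite lerD2r ler_pM2l //.
have diam : enorm (z - z0) <= 2 * D.
  have := enorm_sqrB_le z z0; have := XD _ Xz; have := XD _ Xz0.
  have := enorm_ge0 z; have := enorm_ge0 z0; have := enorm_ge0 (z - z0); nra.
have := gradf_lip theta theta Xz Xz0; rewrite subrr enorm0 mulr0 add0r -/q => lip.
have : K2 * enorm (z - z0) * q <= K2 * (2 * D) * q by rewrite ler_wpM2r // ler_wpM2l.
have := enorm_ge0 (gradf theta z - gradf theta z0); nra.
Qed.

Lemma enorm_sqr_grad_le theta theta_s z G : X z ->
  (forall z, X z -> enorm (gradf theta_s z) ^+ 2 <= G) ->
  enorm (gradf theta z) ^+ 2 <= 2 * K1 ^+ 2 * enorm (theta - theta_s) ^+ 2 + 2 * G.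
Proof.
move=> Xz G_ub.
have := enorm_sqrD_le (gradf theta z - gradf theta_s z) (gradf theta_s z).
rewrite subrK => /le_trans; apply.
have := enorm_gradB_le theta theta_s Xz; have := G_ub _ Xz.
have := enorm_ge0 (gradf theta z - gradf theta_s z); have := enorm_ge0 (theta - theta_s).
nra.
Qed.

Lemma enorm_sqr_sgd_drift_le n (z : 'I_n -> 'rV[R]_m) (S : {set 'I_n})
    theta theta_s theta_hs (G eta : R) :
  (forall i, X (z i)) -> (0 < #|S|)%N ->
  (forall z, X z -> enorm (gradf theta_s z) ^+ 2 <= G) ->
  enorm (theta - (eta / #|S|%:R) *: (\sum_(i in S) gradf theta (z i)) - theta_s) ^+ 2
    <= (4 + 8 * eta ^+ 2 * K1 ^+ 2) * enorm (theta - theta_hs) ^+ 2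
       + (4 + 8 * eta ^+ 2 * K1 ^+ 2) * enorm (theta_s - theta_hs) ^+ 2
       + 4 * eta ^+ 2 * G.
Proof.
move=> Xz S0 G_ub; set r := theta - theta_s.
set g := #|S|%:R^-1 *: \sum_(i in S) gradf theta (z i).
have -> : theta - (eta / #|S|%:R) *: (\sum_(i in S) gradf theta (z i)) - theta_s =
    r - eta *: g by rewrite /r /g scalerA addrAC.
have g_le : enorm g ^+ 2 <= 2 * K1 ^+ 2 * enorm r ^+ 2 + 2 * G.
  by apply: enorm_sqr_mean_le => // i _; exact: enorm_sqr_grad_le.
have r_le : enorm r ^+ 2 <=
    2 * enorm (theta - theta_hs) ^+ 2 + 2 * enorm (theta_s - theta_hs) ^+ 2.
  have -> : r = (theta - theta_hs) - (theta_s - theta_hs) by rewrite opprB addrA subrK.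
  exact: enorm_sqrB_le.
have := enorm_sqrB_le r (eta *: g); rewrite enorm_sqrZ.
have := ler_wpM2l (sqr_ge0 eta) g_le.
have c_ge0 : 0 <= 2 + 4 * eta ^+ 2 * K1 ^+ 2.
  by have := mulr_ge0 (sqr_ge0 eta) (sqr_ge0 K1); lra.
have := ler_wpM2l c_ge0 r_le; lra.
Qed.

End gradient_bounds.

Section binomial_counting.
Local Close Scope classical_set_scope.

Lemma card_draws_mem n b (i : 'I_n) :
  (#|[set S : {set 'I_n} | (#|S| == b) && (i \in S)]| * n = b * 'C(n, b))%N.
Proof.
case: b => [|b].
  rewrite mul0n (eq_card0 (A := [set S : {set 'I_n} | _])) // => S.
  by rewrite !inE cards_eq0; case: eqP => // ->; rewrite inE.
case: n i => [[]//|n] i.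
set A := [set S : {set 'I_n.+1} | #|S| == b.+1].
set B := [set S : {set 'I_n.+1} | i \in S].
have cardAD : #|A :\: B| = 'C(n, b.+1).
  have -> : 'C(n, b.+1) = #|[set S : {set 'I_n.+1} | S \subset [set~ i] & #|S| == b.+1]|.
    by rewrite cards_draws cardsC1 card_ord.
  by apply: eq_card => S; rewrite !inE finset.subsetC -finset.disjoints_subset disjoints1 andbC.
have cardAI : #|A :&: B| = 'C(n, b).
  by apply/eqP; rewrite -(eqn_add2r #|A :\: B|) cardsID cardAD card_draws card_ord binS addnC.
rewrite -mul_bin_diag mulnC -cardAI; congr (_ * _)%N.
by apply: eq_card => S; rewrite !inE.
Qed.

End binomial_counting.

Section tv_weighted_common_part.
Local Open Scope ereal_scope.
Context {R : realType} {k : nat} (mu1 mu2 : probability 'rV[R]_k R)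
  (lam1 lam2 rho : {measure set 'rV[R]_k -> \bar R}).
Hypothesis mu1E : forall A, measurable A -> mu1 A = lam1 A + rho A.
Hypothesis mu2E : forall A, measurable A -> mu2 A = lam2 A + rho A.

Lemma charge_variation_le_common_part (P N : set 'rV[R]_k)
    (h : hahn_decomposition (cadd (charge_of_finite_measure mu1)
                                  (copp (charge_of_finite_measure mu2))) P N) A :
  measurable A -> charge_variation h A <= lam1 A + lam2 A.
Proof.
move=> mA.
have [mP mN] : measurable P /\ measurable N by case: h => -[? _] [? _].
rewrite /charge_variation /= jordan_posE jordan_negE cjordan_posE cjordan_negE.
rewrite /crestr0 mem_set //= /crestr /= /cadd /copp /charge_of_finite_measure /=.
have fin1 E : measurable E -> lam1 E \is a fin_num /\ rho E \is a fin_num.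
  by move=> mE; apply/andP; rewrite -fin_numD -mu1E // fin_num_measure.
have fin2 E : measurable E -> lam2 E \is a fin_num.
  move=> mE; suff /andP[] : (lam2 E \is a fin_num) && (rho E \is a fin_num) by [].
  by rewrite -fin_numD -mu2E // fin_num_measure.
have mAP := measurableI _ _ mA mP; have mAN := measurableI _ _ mA mN.
rewrite /copp /= !mu1E // !mu2E //.
have [[l1P rP] [l1N rN]] := (fin1 _ mAP, fin1 _ mAN).
have [[l1A _] l2A] := (fin1 _ mA, fin2 _ mA).
have [l2P l2N] := (fin2 _ mAP, fin2 _ mAN).
have le1 : (fine (lam1 (A `&` P)) <= fine (lam1 A))%R.
  by rewrite fine_le //; apply: le_measure; rewrite ?inE // => ? [].
have le2 : (fine (lam2 (A `&` N)) <= fine (lam2 A))%R.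
  by rewrite fine_le //; apply: le_measure; rewrite ?inE // => ? [].
have ge1 := fine_ge0 (measure_ge0 lam1 (A `&` N)).
have ge2 := fine_ge0 (measure_ge0 lam2 (A `&` P)).
rewrite -(fineK l1P) -(fineK rP) -(fineK l1N) -(fineK rN) -(fineK l2P) -(fineK l2N).
by rewrite -(fineK l1A) -(fineK l2A) -!EFinD lee_fin; lra.
Qed.
Lemma tv_weighted_le_common_part (w : 'rV[R]_k -> R) :
  measurable_fun setT w -> (forall x, 0 <= w x)%R ->
  tv_weighted w mu1 mu2 <= \int[lam1]_x (w x)%:E + \int[lam2]_x (w x)%:E.
Proof.
move=> mw w_ge0; have mwE : measurable_fun setT (EFin \o w) by exact/measurable_EFinP.
apply: ub_ereal_sup => _ [P [N [h ->]]].
rewrite -ge0_integral_measure_add //; last by move=> x _; rewrite lee_fin.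
apply: (ge0_le_measure_integral (m2 := measure_add lam1 lam2)) => // A mA.
by have := charge_variation_le_common_part h mA; rewrite -measure_addE.
Qed.

End tv_weighted_common_part.

Section minibatch_decomposition.
Local Open Scope ereal_scope.
Context {R : realType} {d n : nat} (mu : probability 'rV[R]_d R) (eta : R) (b : nat).
Implicit Types (grad : 'rV[R]_d -> 'I_n -> 'rV[R]_d) (Q : {set {set 'I_n}}).

Definition minibatch_part grad (t : 'rV[R]_d) Q : {measure set 'rV[R]_d -> \bar R} :=
  mscale ('C(n, b)%:R^-1)%:nng%R
    (msum_seq [seq pushforward_measure mu (measurable_sgd_step grad eta b batch t)
                 | batch <- enum Q]).

Lemma minibatch_partE grad t Q A :
  minibatch_part grad t Q A =
  ('C(n, b)%:R^-1)%:E * \sum_(S in Q) mu (sgd_step grad eta b S t @^-1` A).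
Proof. by rewrite /= /mscale msum_seqE big_map big_enum. Qed.

Lemma eq_minibatch_part grad gradh t Q A :
  (forall S j, S \in Q -> j \in S -> grad t j = gradh t j) ->
  minibatch_part grad t Q A = minibatch_part gradh t Q A.
Proof.
move=> eq_grad; rewrite !minibatch_partE; congr (_ * _); apply: eq_bigr => S QS.
suff -> : sgd_step grad eta b S t = sgd_step gradh eta b S t by [].
apply/funext => v; rewrite /sgd_step; congr (_ - _ *: _ + _)%R.
by apply: eq_bigr => j; exact: eq_grad.
Qed.

Lemma is_sgd_kernel_split grad P (i : 'I_n) t A :
  is_sgd_kernel mu grad eta b P -> measurable A ->
  P t A = minibatch_part grad t [set S : {set 'I_n} | (#|S| == b) && (i \in S)] A
        + minibatch_part grad t [set S : {set 'I_n} | (#|S| == b) && (i \notin S)] A.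
Proof.
move=> hP mA; rewrite hP // !minibatch_partE -ge0_muleDr ?sume_ge0 //.
rewrite [X in _ * X](bigID (fun S : {set 'I_n} => i \in S)) /=.
by congr (_ * (_ + _)); apply: eq_bigl => S; rewrite inE.
Qed.

Lemma integral_minibatch_part_le grad t Q (w : 'rV[R]_d -> R) (B : R) :
  measurable_fun setT w -> (forall x, 0 <= w x)%R ->
  (forall S, S \in Q -> \int[mu]_v (w (sgd_step grad eta b S t v))%:E <= B%:E) ->
  \int[minibatch_part grad t Q]_x (w x)%:E <= ('C(n, b)%:R^-1 * #|Q|%:R * B)%:E.
Proof.
move=> mw w_ge0 wB; have mwE : measurable_fun setT (EFin \o w) by exact/measurable_EFinP.
rewrite ge0_integral_mscale //; last by move=> x _; rewrite lee_fin.
rewrite ge0_integral_msum_seq // big_map big_enum.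
rewrite -mulrA EFinM lee_wpmul2l ?lee_fin ?invr_ge0 //.
rewrite mulr_natl -sumr_const -sumEFin; apply: lee_sum => S QS.
by rewrite ge0_integral_pushforward_measure //; exact: wB.
Qed.

Lemma tv_weighted_sgd_kernels_le grad gradh P Ph (i : 'I_n) t (w : 'rV[R]_d -> R) (B : R) :
  is_sgd_kernel mu grad eta b P -> is_sgd_kernel mu gradh eta b Ph ->
  (forall theta j, j != i -> grad theta j = gradh theta j) -> (b <= n)%N ->
  measurable_fun setT w -> (forall x, 0 <= w x)%R ->
  (forall S : {set 'I_n}, #|S| = b ->
     \int[mu]_v (w (sgd_step grad eta b S t v))%:E <= B%:E) ->
  (forall S : {set 'I_n}, #|S| = b ->
     \int[mu]_v (w (sgd_step gradh eta b S t v))%:E <= B%:E) ->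
  tv_weighted w (P t) (Ph t) <= ((2 * b%:R / n%:R) * B)%:E.
Proof.
move=> hP hPh grad_off_i bn mw w_ge0 wB wBh.
set Qin := [set S : {set 'I_n} | (#|S| == b) && (i \in S)]%SET.
set Qout := [set S : {set 'I_n} | (#|S| == b) && (i \notin S)]%SET.
have same_out S j : S \in Qout -> j \in S -> grad t j = gradh t j.
  by rewrite inE => /andP[_ iS] jS; apply: grad_off_i; apply: contraNneq iS => <-.
have Qin_card S : S \in Qin -> #|S| = b by rewrite inE => /andP[/eqP].
apply: le_trans (tv_weighted_le_common_part (lam1 := minibatch_part grad t Qin)
  (lam2 := minibatch_part gradh t Qin) (rho := minibatch_part grad t Qout) _ _ mw w_ge0) _.
- by move=> A; exact: is_sgd_kernel_split.
- by move=> A mA; rewrite (eq_minibatch_part _ same_out); exact: is_sgd_kernel_split.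
apply: le_trans (leeD (integral_minibatch_part_le mw w_ge0 (fun S QS => wB S (Qin_card S QS)))
  (integral_minibatch_part_le mw w_ge0 (fun S QS => wBh S (Qin_card S QS)))) _.
have n_neq0 : (n%:R != 0 :> R)%R by case: n i {grad_off_i Qin Qout same_out Qin_card} => [[]|].
have C_neq0 : ('C(n, b)%:R != 0 :> R)%R by rewrite pnatr_eq0 -lt0n bin_gt0.
have -> : (#|Qin|%:R = b%:R * 'C(n, b)%:R / n%:R :> R)%R.
  by rewrite -natrM -(card_draws_mem b i) natrM mulfK.
rewrite -EFinD lee_fin [X in (X <= _)%R](_ : _ = 2 * b%:R / n%:R * B)%R //.
by field; rewrite C_neq0 n_neq0.
Qed.

End minibatch_decomposition.

Section sgd_lyapunov_step.
Context {R : realType} {d m : nat} (mu : probability 'rV[R]_d R) (sigma2 : R).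
Hypothesis mean0 : forall i : 'I_d, mu.-integrable setT (fun v => (v ord0 i)%:E) /\
  (\int[mu]_v (v ord0 i)%:E = 0)%E.
Hypothesis second_moment : (\int[mu]_v ((enorm v) ^+ 2)%:E)%E = sigma2%:E.
Variables (X : set 'rV[R]_m) (gradf : 'rV[R]_d -> 'rV[R]_m -> 'rV[R]_d) (K1 K2 : R).
Hypothesis gradf_lip : forall theta thetah z zh, X z -> X zh ->
  enorm (gradf theta z - gradf thetah zh) <=
    K1 * enorm (theta - thetah) + K2 * enorm (z - zh) * (enorm theta + enorm thetah + 1).

Lemma integral_lyapunov_sgd_step_le n (z : 'I_n -> 'rV[R]_m) (b : nat) (S : {set 'I_n})
    (t theta_s theta_hs : 'rV[R]_d) (G eta psi M : R) :
  (forall i, X (z i)) -> #|S| = b -> (0 < b)%N ->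
  (forall z, X z -> enorm (gradf theta_s z) ^+ 2 <= G) -> 0 <= psi ->
  psi * (4 + 8 * eta ^+ 2 * K1 ^+ 2) <= M ->
  1 + psi * (1 + eta ^+ 2 * sigma2
             + (4 + 8 * eta ^+ 2 * K1 ^+ 2) * enorm (theta_s - theta_hs) ^+ 2
             + 4 * eta ^+ 2 * G) <= M ->
  (\int[mu]_v (1 + psi * (1 + enorm (sgd_step (fun th i => gradf th (z i)) eta b S t v
                                     - theta_s) ^+ 2))%:E
   <= (M * (1 + enorm (t - theta_hs) ^+ 2))%:E)%E.
Proof.
move=> Xz Sb b_gt0 G_ub psi_ge0 M_ge1 M_ge2.
set u := t - (eta / b%:R) *: (\sum_(i in S) gradf t (z i)) - theta_s.
under eq_integral => v _.
  rewrite /sgd_step addrAC -/u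
    (_ : 1 + psi * (1 + _) = (1 + psi) + psi * enorm (u + eta *: v) ^+ 2).
  over.
  by ring.
rewrite (integral_affine_enorm_sqr mean0 second_moment) lee_fin.
have S_gt0 : (0 < #|S|)%N by rewrite Sb.
have := enorm_sqr_sgd_drift_le gradf_lip t theta_hs eta Xz S_gt0 G_ub.
rewrite Sb -/u.
have := ler_wpM2r (exprn_ge0 2 (enorm_ge0 (t - theta_hs))) M_ge1.
move: M_ge2; nra.
Qed.

End sgd_lyapunov_step.

Theorem lemmaD4 (R : realType) (d m n b : nat)
  (X : set 'rV[R]_m) (D : R)
  (f : 'rV[R]_d -> 'rV[R]_m -> R) (gradf : 'rV[R]_d -> 'rV[R]_m -> 'rV[R]_d)
  (K1 K2 : R) (mu_xi : probability 'rV[R]_d R) (p : 'rV[R]_d -> R) (sigma2 : R)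
  (x xh : 'I_n -> 'rV[R]_m) (eta psi : R)
  (P Ph : 'rV[R]_d -> probability 'rV[R]_d R)
  (theta_s theta_hs : 'rV[R]_d) :
  (* X bounded *)
  (forall z, X z -> enorm z <= D) ->
  (* f differentiable in theta, with gradient gradf *)
  (forall z theta, X z -> differentiable (fun t => f t z) theta /\
     forall v, 'D_v (fun t => f t z) theta = dotv (gradf theta z) v) ->
  (* (A1) *)
  0 < K1 -> 0 < K2 ->
  (forall theta thetah z zh, X z -> X zh ->
     enorm (gradf theta z - gradf thetah zh) <=
       K1 * enorm (theta - thetah) +
       K2 * enorm (z - zh) * (enorm theta + enorm thetah + 1)) ->
  (* (N) *)
  continuous p -> (forall v, 0 < p v) -> has_lebesgue_density mu_xi p ->
  (forall i : 'I_d, mu_xi.-integrable setT (fun v => (v ord0 i)%:E) /\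
     (\int[mu_xi]_v (v ord0 i)%:E = 0)%E) ->
  (\int[mu_xi]_v ((enorm v) ^+ 2)%:E)%E = sigma2%:E ->
  (* datasets differing in at most one index *)
  (forall i, X (x i)) -> (forall i, X (xh i)) ->
  (exists i0 : 'I_n, forall i, i != i0 -> x i = xh i) ->
  (0 < b)%N -> (b <= n)%N -> 0 < eta ->
  is_sgd_kernel mu_xi (fun theta i => gradf theta (x i)) eta b P ->
  is_sgd_kernel mu_xi (fun theta i => gradf theta (xh i)) eta b Ph ->
  (* minimizers of the empirical risks *)
  (forall theta, n%:R^-1 * (\sum_i f theta_s (x i)) <=
                 n%:R^-1 * (\sum_i f theta (x i))) ->
  (forall theta, n%:R^-1 * (\sum_i f theta_hs (xh i)) <=
                 n%:R^-1 * (\sum_i f theta (xh i))) ->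
  0 < psi ->
  let V := fun theta => 1 + enorm (theta - theta_s) ^+ 2 in
  let Vh := fun theta => 1 + enorm (theta - theta_hs) ^+ 2 in
  let dpsi := tv_weighted (fun theta => 1 + psi * V theta) in
  let c := 4 + 8 * eta ^+ 2 * K1 ^+ 2 in
  let G := sup [set enorm (gradf theta_s z) ^+ 2 | z in X] in
  (ereal_sup [set (dpsi (P theta) (Ph theta) * ((Vh theta)^-1)%:E)%E
              | theta in [set: 'rV[R]_d]]
   <= ((2 * b%:R / n%:R) *
       Num.max (psi * c)
         (1 + psi * (1 + eta ^+ 2 * sigma2 + c * enorm (theta_s - theta_hs) ^+ 2
                     + 4 * eta ^+ 2 * G)))%:E)%E.

Proof.
move=> XD _ _ K2_gt0 gradf_lip _ _ _ mean0 second_moment Xx Xxh [i0 same_off_i0] b_gt0 bn _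
  hP hPh _ _ psi_gt0; cbv zeta.
set c := 4 + _; set G := sup _; set M := Num.max _ _.
have G_ub z : X z -> enorm (gradf theta_s z) ^+ 2 <= G.
  move=> Xz; apply: ub_le_sup; last by exists z.
  exact: (has_ubound_sqr_grad (ltW K2_gt0) gradf_lip _ (Xx i0) XD).
have [M_ge1 M_ge2] : psi * c <= M /\ 1 + psi * (1 + eta ^+ 2 * sigma2 +
    c * enorm (theta_s - theta_hs) ^+ 2 + 4 * eta ^+ 2 * G) <= M.
  by rewrite !le_max !lexx orbT.
apply: ub_ereal_sup => _ [t _ <-].
pose w v := 1 + psi * (1 + enorm (v - theta_s) ^+ 2).
set Vt := 1 + enorm (t - theta_hs) ^+ 2.
have mw : measurable_fun setT w := measurable_lyapunov_weight psi theta_s.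
have w_ge0 v : 0 <= w v.
  by have := exprn_ge0 2 (enorm_ge0 (v - theta_s)); rewrite /w; nra.
have lyap z : (forall i, X (z i)) -> forall S : {set 'I_n}, #|S| = b ->
    (\int[mu_xi]_v (w (sgd_step (fun th i => gradf th (z i)) eta b S t v))%:E
     <= (M * Vt)%:E)%E.
  move=> Xz S Sb.
  exact: (integral_lyapunov_sgd_step_le mean0 second_moment gradf_lip t Xz Sb b_gt0 G_ub
    (ltW psi_gt0) M_ge1 M_ge2).
have same_grad th j : j != i0 -> gradf th (x j) = gradf th (xh j).
  by move=> /same_off_i0 ->.
have := tv_weighted_sgd_kernels_le hP hPh same_grad bn mw w_ge0 (lyap _ Xx) (lyap _ Xxh).
have Vt_gt0 : 0 < Vt by rewrite ltr_pwDl // exprn_ge0 // enorm_ge0.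
have Vt_inv_ge0 : (0 <= (Vt^-1)%:E)%E by rewrite lee_fin invr_ge0 ltW.
move=> /(lee_wpmul2r Vt_inv_ge0) /le_trans; apply.
by rewrite -EFinM mulrA mulfK ?gt_eqF.
Qed.
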